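(* For any path $\alpha:[0,1]\to\mathrm{Mult}_n(\mathbb{C})$ and any $\widetilde\alpha(0)\in\mathbb{C}^n$ with $\mathrm{Mult}(\widetilde\alpha(0))=\alpha(0)$, there exists a path $\widetilde\alpha:[0,1]\to\mathbb{C}^n$ starting at $\widetilde\alpha(0)$ with $\mathrm{Mult}\circ\widetilde\alpha=\alpha$, and this lifted path is unique when $\alpha$ has weakly increasing shape.
   Context: $\mathrm{Mult}_n(\mathbb{C})=\mathbb{C}^n/\mathrm{Sym}_n$ is the space of $n$-element multisets in $\mathbb{C}$ and $\mathrm{Mult}:\mathbb{C}^n\to\mathrm{Mult}_n(\mathbb{C})$ the quotient map. The shape of a multiset is the integer partition of $n$ formed by its multiplicities. Integer partitions of $n$ are ordered by $\lambda\le\mu$ iff $\mu$ is obtained from $\lambda$ by partitioning the parts of $\lambda$ into blocks and summing each block. A path $\alpha$ has weakly increasing shape if $s\le t$ implies $\mathrm{Shape}(\alpha(s))\le\mathrm{Shape}(\alpha(t))$. *)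

From HB Require Import structures.
From mathcomp Require Import all_boot all_order all_algebra.
From mathcomp Require Import finmap multiset.
From mathcomp Require Import complex.
From mathcomp Require Import reals.

Set Implicit Arguments.
Unset Strict Implicit.
Unset Printing Implicit Defensive.

Import Order.TTheory GRing.Theory Num.Theory.
Local Open Scope ring_scope.

Section MultDefs.
Variable R : realType.

Definition cdist (z w : R[i]) : R := Normc.normc (z - w).

Definition Cn (n : nat) := 'I_n -> R[i].

(* open subsets of C^n (the usual (product / Euclidean) topology, via the
   equivalent sup metric) *)
Definition openCn (n : nat) (A : Cn n -> Prop) : Prop :=
  forall x, A x -> exists2 e : R, 0 < e &
    forall y : Cn n, (forall i, cdist (y i) (x i) < e) -> A y.

Definition Mult (n : nat) (x : Cn n) : multiset R[i] :=
  seq_mset [seq x i | i <- enum 'I_n].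

(* Mult_n(C) is the image of Mult; a set U of multisets is open in the quotient
   topology iff its preimage under Mult is open in C^n *)
Definition in_Multn (n : nat) (m : multiset R[i]) : Prop :=
  exists x : Cn n, Mult x = m.

Definition openMultn (n : nat) (U : multiset R[i] -> Prop) : Prop :=
  openCn (fun x : Cn n => U (Mult x)).

Definition in01 (t : R) : Prop := 0 <= t <= 1.

Definition is_path_Multn (n : nat) (a : R -> multiset R[i]) : Prop :=
  (forall t, in01 t -> in_Multn n (a t)) /\
  (forall U, openMultn n U ->
     forall t, in01 t -> U (a t) ->
       exists2 d : R, 0 < d &
         forall s, in01 s -> `|s - t| < d -> U (a s)).

Definition is_path_Cn (n : nat) (b : R -> Cn n) : Prop :=
  forall t, in01 t -> forall e : R, 0 < e ->
    exists2 d : R, 0 < d &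
      forall s, in01 s -> `|s - t| < d -> forall i, cdist (b s i) (b t i) < e.

Definition Shape (m : multiset R[i]) : seq nat :=
  sort geq [seq m c | c <- enum_fset (finsupp m)].

End MultDefs.

(* partition order: lam <= mu iff mu is obtained from lam by partitioning the
   parts of lam into blocks and summing each block; f assigns each part of lam
   to the block (= part of mu) it belongs to *)
Definition part_le (lam mu : seq nat) : Prop :=
  exists f : 'I_(size lam) -> 'I_(size mu),
    forall j : 'I_(size mu),
      nth 0%N mu j = (\sum_(i < size lam | f i == j) nth 0%N lam i)%N.

Definition weakly_increasing_shape (R : realType) (a : R -> multiset R[i]) : Prop :=
  forall s t, in01 s -> in01 t -> s <= t -> part_le (Shape (a s)) (Shape (a t)).

(* A multiset is handled through its enumerations, and lifting is proved for paths
   of n-point multisets in any metric space, by strong induction on n.  Near a time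
   where the multiset is not constant (not n copies of one point) it splits into
   two clusters that stay apart, each a path of fewer points; so it lifts locally,
   and local lifts, glued after permuting indices, give a lift on every interval of
   non-constant times.  At a constant time any pointwise choice is continuous: the
   lift takes the forced value there, and on each gap between constant times it is
   a lift of the gap, obtained by gluing countably many lifts towards the constant
   end points.
   For uniqueness, let two lifts agree at t, and let r separate the distinct points
   of their common value.  Shortly after t both lifts stay within r/2 of it, and a
   weakly increasing shape forbids the number of distinct points to grow, so points
   that coincide at t stay together; as the lifts have the same multiset of values,
   they coincide.  Agreement then propagates over [0, 1] by real induction. *)

From HB Require Import structures.
From mathcomp Require Import all_boot all_order all_algebra.
From mathcomp Require Import finmap multiset complex reals boolp lra zify.
From Stdlib Require Import ClassicalEpsilon.

Set Implicit Arguments.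
Unset Strict Implicit.
Unset Printing Implicit Defensive.

Import Order.TTheory GRing.Theory Num.Theory.
Local Open Scope ring_scope.

Section Closeness.
Variables (R : numDomainType) (T : eqType) (d : T -> T -> R).
Hypothesis d_sym : forall x y, d x y = d y x.
Hypothesis d_tri : forall x y z, d x z <= d x y + d y z.
Hypothesis d_refl : forall x, d x x = 0.

Definition close (e : R) (s p : seq T) := all2 (fun z w => d z w < e) s p.

Definition mclose (e : R) (s p : seq T) := exists2 s', perm_eq s' s & close e s' p.

Definition reindex (x0 : T) (Is : seq nat) (s : seq T) := [seq nth x0 s i | i <- Is].

Lemma close_size e s p : close e s p -> size s = size p.
Proof. by elim: s p => [|z s IH] [|w p] //= /andP[_ /IH ->]. Qed.

Lemma close_refl e s : 0 < e -> close e s s.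
Proof. by move=> e_gt0; elim: s => //= z s ->; rewrite d_refl e_gt0. Qed.

Lemma close_sym e s p : close e s p -> close e p s.
Proof. by elim: s p => [|z s IH] [|w p] //= /andP[h /IH ->]; rewrite d_sym h. Qed.

Lemma close_trans e1 e2 s p q : close e1 s p -> close e2 p q -> close (e1 + e2) s q.
Proof.
elim: s p q => [|x s IH] [|y p] [|z q] //= /andP[hxy hs] /andP[hyz hp].
by rewrite (IH _ _ hs hp) andbT (le_lt_trans (d_tri x y z)) ?ltrD.
Qed.

Lemma close_le e e' s p : e <= e' -> close e s p -> close e' s p.
Proof.
move=> le_ee'; elim: s p => [|z s IH] [|w p] //= /andP[h /IH ->].
by rewrite (lt_le_trans h).
Qed.

Lemma close_cat e s1 s2 p1 p2 :
  close e s1 p1 -> close e s2 p2 -> close e (s1 ++ s2) (p1 ++ p2).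
Proof. by elim: s1 p1 => [|z s IH] [|w p] //= /andP[-> /IH h] /h. Qed.

Lemma close_nth x0 e s p i :
  close e s p -> (i < size s)%N -> d (nth x0 s i) (nth x0 p i) < e.
Proof.
elim: s p i => [|z s IH] [|w p] [|i] //=; first by case/andP.
by case/andP=> _ /IH; apply.
Qed.

Lemma close_codom (I : finType) e (f g : I -> T) :
  (forall i, d (f i) (g i) < e) -> close e (codom f) (codom g).
Proof. by move=> fg; rewrite !codomE; elim: (enum I) => //= i s ->; rewrite fg. Qed.

Lemma close_memr e s p w : close e s p -> w \in p -> exists2 z, z \in s & d z w < e.
Proof.
elim: s p => [|z s IH] [|y p] //= /andP[hzy hsp]; rewrite in_cons => /predU1P[->|/(IH _ hsp)].
  by exists z; rewrite ?mem_head.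
by case=> z' hz' h; exists z'; rewrite // in_cons hz' orbT.
Qed.

Lemma close_nseq e s c : close e s (nseq (size s) c) = all (fun z => d z c < e) s.
Proof. by elim: s => //= z s ->. Qed.

Lemma close_filter e (P : pred T) s p :
  {in p, forall w z, d z w < e -> P z = P w} -> close e s p ->
  close e (filter P s) (filter P p).
Proof.
elim: s p => [|z s IH] [|w p] //= hP /andP[hzw hsp].
have {}IH : close e (filter P s) (filter P p).
  by apply: IH hsp => w' hw'; apply: hP; rewrite in_cons hw' orbT.
by rewrite (hP w (mem_head _ _) z hzw); case: (P w); rewrite //= hzw.
Qed.

Lemma close_reindex x0 Is e s p :
  perm_eq Is (iota 0 (size s)) -> close e s p ->
  close e (reindex x0 Is s) (reindex x0 Is p).
Proof.
move=> /perm_mem Is_iota hsp; have: {subset Is <= iota 0 (size s)} by move=> i; rewrite Is_iota.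
elim: Is {Is_iota} => //= i Is IH sub_Is; rewrite IH ?andbT.
  by apply: close_nth hsp _; have := sub_Is i (mem_head _ _); rewrite mem_iota.
by move=> j hj; rewrite sub_Is // in_cons hj orbT.
Qed.
End Closeness.

Section RealInduction.
Variable R : realType.

Lemma has_sup_bounded (E : R -> Prop) a M :
  E a -> (forall x, E x -> x <= M) -> classical_sets.has_sup E.
Proof. by move=> Ea EM; split; [exists a | exists M => x /EM]. Qed.

Lemma real_induction (P : R -> Prop) (u v : R) :
  P u ->
  (forall t, u <= t < v -> P t ->
     exists2 δ, 0 < δ & forall s, t < s < t + δ -> s <= v -> P s) ->
  (forall t, u < t <= v -> (forall s, u <= s < t -> P s) -> P t) ->
  forall t, u <= t <= v -> P t.
Proof.
move=> Pu step lim t /andP[ut tv].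
pose E y := u <= y <= v /\ forall s, u <= s <= y -> P s.
have Eu : E u.
  by split=> [|s /andP[us su]]; [rewrite lexx (le_trans ut tv) | have -> : s = u by lra].
have hsup : classical_sets.has_sup E by apply: (has_sup_bounded (M := v) Eu) => y [] /andP[_ yv] _.
set S := sup E.
have uS : u <= S by apply: sup_upper_bound.
have Sv : S <= v by apply: ge_sup; [exists u | move=> y [] /andP[_ yv] _].
have below s : u <= s < S -> P s.
  move=> /andP[us sS]; have Ss_gt0 : 0 < S - s by rewrite subr_gt0.
  have [y [_ Py] hy] := sup_adherent Ss_gt0 hsup.
  by apply: Py; rewrite us /=; rewrite -/S in hy; lra.
have PS : P S.
  have [<-|uS'] := eqVneq u S; first exact: Pu.
  by apply: lim => //; rewrite lt_neqAle uS' uS Sv.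
have vS : v <= S.
  rewrite leNgt; apply/negP => Sv'.
  have [δ δ_gt0 hδ] := step S ltac:(lra) PS.
  pose y := Num.min v (S + δ / 2).
  have Sy : S < y by rewrite lt_min Sv'; lra.
  have Ey : E y.
    split=> [|s /andP[us sy]]; first by rewrite ge_min lexx (le_trans uS (ltW Sy)).
    have [sS|Ss|->] := ltgtP s S; [by apply: below; rewrite us | | exact: PS].
    move: sy; rewrite le_min => /andP[sv sSδ]; apply: hδ => //; rewrite Ss /=; lra.
  by have := sup_upper_bound hsup Ey; rewrite -/S; lra.
have [tS|->] : t < S \/ t = S by lra.
  by apply: below; lra.
exact: PS.
Qed.

Definition last_in (P : R -> Prop) (u t : R) : R :=
  sup (fun s => s = u \/ (u <= s <= t /\ P s)).

Definition first_in (P : R -> Prop) (v t : R) : R :=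
  - last_in (fun s => P (- s)) (- v) (- t).

Section LastFirst.
Variables (P : R -> Prop) (u : R).

Let last_in_sup t : u <= t ->
  classical_sets.has_sup (fun s => s = u \/ (u <= s <= t /\ P s)).
Proof. by move=> ut; apply: (has_sup_bounded (M := t) (or_introl erefl)) => s [->|[/andP[]]]. Qed.

Lemma last_in_ge t : u <= t -> u <= last_in P u t.
Proof. by move=> ut; apply: (sup_upper_bound (last_in_sup ut)); left. Qed.

Lemma last_in_le t : u <= t -> last_in P u t <= t.
Proof. by move=> ut; apply: ge_sup; [exists u; left | move=> s [->|[/andP[]]]]. Qed.

Lemma last_in_gt t s : u <= t -> last_in P u t < s <= t -> ~ P s.
Proof.
move=> ut /andP[lts st] Ps; have us : u <= s := le_trans (last_in_ge ut) (ltW lts).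
have := sup_upper_bound (last_in_sup ut) (or_intror (conj (introT andP (conj us st)) Ps)).
by rewrite -/(last_in P u t) leNgt lts.
Qed.

Lemma last_in_eq s t : u <= s <= t -> (forall r, s < r <= t -> ~ P r) ->
  last_in P u s = last_in P u t.
Proof.
move=> /andP[us st] noP; congr sup; apply: funext => r; apply: propext.
split=> [[->|[/andP[ur rs] Pr]]|[->|[/andP[ur rt] Pr]]]; [by left | right | by left | right].
  by split=> //; rewrite ur (le_trans rs st).
split=> //; rewrite ur leNgt /=; apply/negP => sr.
by apply: (noP r) => //; rewrite sr rt.
Qed.

End LastFirst.

Section FirstIn.
Variables (P : R -> Prop) (v : R).

Lemma first_in_le t : t <= v -> first_in P v t <= v.
Proof. by move=> tv; rewrite /first_in lerNl last_in_ge // lerN2. Qed.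

Lemma first_in_ge t : t <= v -> t <= first_in P v t.
Proof. by move=> tv; rewrite /first_in lerNr last_in_le // lerN2. Qed.

Lemma first_in_lt t s : t <= v -> t <= s < first_in P v t -> ~ P s.
Proof.
move=> tv /andP[ts sft]; rewrite -[s]opprK.
apply: (@last_in_gt (fun s => P (- s)) (- v) (- t)); first by rewrite lerN2.
by rewrite ltrNr lerN2 sft ts.
Qed.

Lemma first_in_eq s t : s <= t <= v -> (forall r, s <= r < t -> ~ P r) ->
  first_in P v s = first_in P v t.
Proof.
move=> /andP[st tv] noP; rewrite /first_in; congr (- _); apply/esym/last_in_eq.
  by rewrite !lerN2 st tv.
by move=> r /andP[tr rs]; apply: noP; rewrite lerNr ltrNl rs tr.
Qed.

End FirstIn.

End RealInduction.

Section DistinctValues.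
Variables (T U : eqType) (h : T -> U).

Lemma undup_map_mem (s : seq T) : undup (map h s) =i map h (undup s).
Proof.
move=> z; rewrite mem_undup; apply/mapP/mapP => -[x xs ->]; exists x => //.
  by rewrite mem_undup.
by rewrite -mem_undup.
Qed.

Lemma size_undup_map (s : seq T) : (size (undup (map h s)) <= size (undup s))%N.
Proof.
rewrite -(size_map h); apply: uniq_leq_size; first exact: undup_uniq.
by move=> z; rewrite undup_map_mem.
Qed.

Lemma uniq_map_inj_in (s : seq T) : uniq (map h s) -> {in s &, injective h}.
Proof.
elim: s => //= z s IH /andP[hz_notin /IH {}IH] x y.
rewrite !in_cons => /predU1P[->|xs] /predU1P[->|ys] // hxy.
- by move: hz_notin; rewrite hxy map_f.
- by move: hz_notin; rewrite -hxy map_f.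
- exact: IH.
Qed.

Lemma size_undup_map_inj (s : seq T) :
  size (undup (map h s)) = size (undup s) -> {in s &, injective h}.
Proof.
move=> eq_size x y xs ys; apply: (uniq_map_inj_in (s := undup s)); rewrite ?mem_undup //.
by rewrite (uniq_size_uniq (undup_uniq _) (undup_map_mem s)) size_map eq_size.
Qed.

End DistinctValues.

Section Metric.
Variables (R : realFieldType) (T : eqType) (d : T -> T -> R).
Hypothesis d_sym : forall x y, d x y = d y x.
Hypothesis d_tri : forall x y z, d x z <= d x y + d y z.
Hypothesis d_refl : forall x, d x x = 0.
Hypothesis d_eq : forall x y, d x y = 0 -> x = y.

Lemma d_ge0 x y : 0 <= d x y.
Proof. by have := d_tri x y x; rewrite d_refl (d_sym y x); lra. Qed.

Lemma d_gt0 x y : x != y -> 0 < d x y.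
Proof.
move=> neq_xy; rewrite lt_neqAle eq_sym d_ge0 andbT.
by apply/eqP => /d_eq /eqP; apply/negP.
Qed.

Lemma separation (p : seq T) x :
  exists2 r, 0 < r & {in p, forall w, w != x -> r <= d w x}.
Proof.
elim: p => [|w p [r r_gt0 IH]]; first by exists 1.
have [->|neq_wx] := eqVneq w x.
  by exists r => // w'; rewrite in_cons => /predU1P[->|/IH//]; rewrite eqxx.
exists (Num.min r (d w x)); first by rewrite lt_min r_gt0 d_gt0.
move=> w'; rewrite in_cons ge_min => /predU1P[-> _|w'p /(IH _ w'p)->//].
by rewrite lexx orbT.
Qed.

Lemma separation_pairwise (p : seq T) :
  exists2 r, 0 < r & {in p &, forall x y, x != y -> r <= d x y}.
Proof.
elim: p => [|z p [r1 r1_gt0 IH]]; first by exists 1.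
have [r2 r2_gt0 sep] := separation p z.
exists (Num.min r1 r2); first by rewrite lt_min r1_gt0 r2_gt0.
move=> x y; rewrite !in_cons => /predU1P[->|xp] /predU1P[->|yp]; rewrite ?eqxx // => neq.
- by rewrite ge_min d_sym sep ?orbT // eq_sym.
- by rewrite ge_min sep ?orbT.
- by rewrite ge_min IH.
Qed.

Lemma close_slack (e : R) s p : close d e s p -> exists2 e', 0 < e' & close d (e - e') s p.
Proof.
elim: s p => [|z s IH] [|w p] //=; first by exists 1.
case/andP=> dzw /IH [e' e'_gt0 hsp]; pose e'' := Num.min ((e - d z w) / 2) e'.
have [e''_le1 e''_le2] : e'' <= (e - d z w) / 2 /\ e'' <= e' by rewrite !ge_min !lexx orbT.
exists e''; first by rewrite lt_min e'_gt0 divr_gt0 // subr_gt0.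
rewrite (close_le _ hsp) ?andbT; first lra.
by rewrite lerD2l lerN2.
Qed.

Lemma rigidity (I : finType) (p q1 q2 : I -> T) r :
  {in codom p &, forall x y, x != y -> r <= d x y} ->
  (forall i, d (q1 i) (p i) < r / 2) -> (forall i, d (q2 i) (p i) < r / 2) ->
  perm_eq (codom q1) (codom q2) ->
  (size (undup (codom q1)) <= size (undup (codom p)))%N -> q1 =1 q2.
Proof.
move=> sep q1p q2p q12 le_size.
have p_eq i j : d (p i) (p j) < r -> p i = p j.
  move=> dp; apply/eqP; apply: contraTT dp => neq; rewrite -leNgt.
  by apply: sep; rewrite ?codom_f.
have q1_p i j : q1 i = q1 j -> p i = p j.
  move=> qij; apply: p_eq; have := q1p j; rewrite -qij => qj.
  by have := d_tri (p i) (q1 i) (p j); rewrite (d_sym (p i) (q1 i)); have := q1p i; lra.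
(* [q1] refines [p]; having no more distinct values, it induces the same partition *)
pose h z := if [pick i | q1 i == z] is Some i then p i else z.
have hq1 i : h (q1 i) = p i.
  by rewrite /h; case: pickP => [j /eqP/q1_p//|/(_ i)]; rewrite eqxx.
have codom_p : codom p = map h (codom q1).
  by rewrite !codomE -map_comp; apply: eq_map => i /=; rewrite hq1.
have h_inj : {in codom q1 &, injective h}.
  apply: size_undup_map_inj; apply/eqP; rewrite eqn_leq size_undup_map.
  by rewrite -codom_p.
move=> i; have /codomP [j q2ij] : q2 i \in codom q1 by rewrite (perm_mem q12) codom_f.
rewrite q2ij; apply: h_inj; rewrite ?codom_f // !hq1; apply: p_eq.
have := q1p j; rewrite -q2ij => qj.
by have := d_tri (p i) (q2 i) (p j); rewrite (d_sym (p i) (q2 i)); have := q2p i; lra.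
Qed.

End Metric.

Section Lifting.
Variables (R : realType) (T : eqType) (x0 : T) (d : T -> T -> R).
Hypothesis d_sym : forall x y, d x y = d y x.
Hypothesis d_tri : forall x y z, d x z <= d x y + d y z.
Hypothesis d_refl : forall x, d x x = 0.
Hypothesis d_eq : forall x y, d x y = 0 -> x = y.

Local Notation close := (close d).
Local Notation mclose := (mclose d).
Local Notation reindex := (reindex x0).

Definition cont_on (rel : R -> seq T -> seq T -> Prop) (u v : R) (f : R -> seq T) :=
  forall t0, t0 \in `[u, v] -> forall e, 0 < e -> exists2 δ, 0 < δ &
    forall t, t \in `[u, v] -> `|t - t0| < δ -> rel e (f t) (f t0).

(* A path of multisets is given by enumerations [A t], continuous up to reordering;
   a lift is a continuous choice of enumerations [b t]. *)
Definition mpath u v A := cont_on mclose u v A.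

Definition lift_on u v A b :=
  {in `[u, v], forall t, perm_eq (b t) (A t)} /\ cont_on close u v b.

Lemma subitvcc (u v u' v' : R) : u <= u' -> v' <= v -> {subset `[u', v'] <= `[u, v]}.
Proof. by move=> uu' v'v t; rewrite !in_itv /= => /andP[? ?]; apply/andP; split; lra. Qed.

Lemma cont_on_sub rel u v u' v' f :
  u <= u' -> v' <= v -> cont_on rel u v f -> cont_on rel u' v' f.
Proof.
move=> uu' v'v fc t0 ht0 e e_gt0.
have [δ δ_gt0 hδ] := fc t0 (subitvcc uu' v'v ht0) e e_gt0.
by exists δ => // t ht; apply/hδ/(subitvcc uu' v'v).
Qed.

Lemma lift_on_sub u v u' v' A b :
  u <= u' -> v' <= v -> lift_on u v A b -> lift_on u' v' A b.
Proof.
move=> uu' v'v [bA bc]; split; last exact: cont_on_sub bc.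
by move=> t /(subitvcc uu' v'v); apply: bA.
Qed.

Lemma cont_on_opp rel u v f :
  cont_on rel u v f -> cont_on rel (- v) (- u) (fun t => f (- t)).
Proof.
move=> fc t0; rewrite -oppr_itvcc => ht0 e e_gt0; have [δ δ_gt0 hδ] := fc _ ht0 e e_gt0.
by exists δ => // t; rewrite -oppr_itvcc => ht htt; apply: hδ; rewrite // -opprD normrN.
Qed.

Lemma lift_on_opp u v A b :
  lift_on u v A b -> lift_on (- v) (- u) (fun t => A (- t)) (fun t => b (- t)).
Proof.
move=> [bA bc]; split; last exact: cont_on_opp.
by move=> t; rewrite -oppr_itvcc; apply: bA.
Qed.

Lemma lift_on_oppK u v A b :
  lift_on (- v) (- u) (fun t => A (- t)) b -> lift_on u v A (fun t => b (- t)).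
Proof.
move=> /lift_on_opp; rewrite !opprK.
by have -> : (fun t => A (- - t)) = A by apply: funext => t; rewrite opprK.
Qed.

Lemma lift_on_point t A : lift_on t t A A.
Proof.
split=> // t0; rewrite in_itv /= -eq_le => /eqP<- e e_gt0.
by exists 1 => // s; rewrite in_itv /= -eq_le => /eqP<- _; apply: close_refl.
Qed.

Lemma cont_on_paste rel s m w f h : s <= m -> m <= w -> f m = h m ->
  cont_on rel s m f -> cont_on rel m w h ->
  cont_on rel s w (fun t => if t <= m then f t else h t).
Proof.
move=> sm mw fh fc hc t0; rewrite in_itv /= => /andP[st0 t0w] e e_gt0.
have [t0m|mt0|->] := ltgtP t0 m.
- have [δ δ_gt0 hδ] := fc t0 ltac:(by rewrite in_itv /= st0 ltW) e e_gt0.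
  exists (Num.min δ (m - t0)) => [|t]; first by rewrite lt_min δ_gt0 subr_gt0.
  rewrite in_itv lt_min /= => /andP[st _] /andP[htδ /ltr_normlP[_ htm]].
  have tm : t <= m by lra.
  by rewrite tm; apply: hδ; rewrite // in_itv /= st.
- have [δ δ_gt0 hδ] := hc t0 ltac:(by rewrite in_itv /= t0w ltW) e e_gt0.
  exists (Num.min δ (t0 - m)) => [|t]; first by rewrite lt_min δ_gt0 subr_gt0.
  rewrite in_itv lt_min /= => /andP[_ tw] /andP[htδ /ltr_normlP[hmt _]].
  have mt : m < t by lra.
  by rewrite leNgt mt /=; apply: hδ; rewrite // in_itv /= tw (ltW mt).
- have m_sm : m \in `[s, m] by rewrite in_itv /= sm lexx.
  have m_mw : m \in `[m, w] by rewrite in_itv /= mw lexx.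
  have [δf δf_gt0 hf] := fc m m_sm e e_gt0.
  have [δh δh_gt0 hh] := hc m m_mw e e_gt0.
  exists (Num.min δf δh) => [|t]; first by rewrite lt_min δf_gt0 δh_gt0.
  rewrite in_itv lt_min /= => /andP[st tw] /andP[htf hth].
  case: ifP => [tm|/negbT]; first by apply: hf; rewrite ?in_itv /= ?st.
  by rewrite -ltNge fh => mt; apply: hh; rewrite ?in_itv /= ?tw ?ltW.
Qed.

Definition align (p q : seq T) : seq nat :=
  epsilon (inhabits [::]) (fun Is => perm_eq Is (iota 0 (size q)) /\ p = reindex Is q).

Lemma alignP p q : perm_eq p q ->
  perm_eq (align p q) (iota 0 (size q)) /\ p = reindex (align p q) q.
Proof.
move=> /(perm_iotaP x0) [Is Is_iota pq].
pose P Is := perm_eq Is (iota 0 (size q)) /\ p = reindex Is q.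
by apply: (epsilon_spec (inhabits [::]) P); exists Is.
Qed.

Lemma perm_reindex Is q : perm_eq Is (iota 0 (size q)) -> perm_eq (reindex Is q) q.
Proof. by move=> Is_iota; apply/(perm_iotaP x0); exists Is. Qed.

Definition glue (f g : R -> seq T) (m : R) : R -> seq T :=
  fun t => if t <= m then f t else reindex (align (f m) (g m)) (g t).

Lemma lift_on_glue n s m w A f g : s <= m -> m <= w ->
  {in `[s, w], forall t, size (A t) = n} ->
  lift_on s m A f -> lift_on m w A g -> lift_on s w A (glue f g m).
Proof.
move=> sm mw A_n [fA fc] [gA gc].
have m_sm : m \in `[s, m] by rewrite in_itv /= sm lexx.
have m_mw : m \in `[m, w] by rewrite in_itv /= mw lexx.
have fg : perm_eq (f m) (g m) by rewrite (permPl (fA m m_sm)) perm_sym gA.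
have [Is_iota fgm] := alignP fg.
have g_size t : t \in `[m, w] -> size (g t) = size (g m).
  move=> ht; rewrite (perm_size (gA t ht)) (perm_size (gA m m_mw)).
  by rewrite !A_n // (subitvcc sm (lexx w)).
split.
- move=> t; rewrite /glue in_itv /= => /andP[st tw]; case: ifP => [tm|/negbT].
    by apply: fA; rewrite in_itv /= st tm.
  rewrite -ltNge => /ltW mt; have ht : t \in `[m, w] by rewrite in_itv /= mt tw.
  by rewrite (permPl (perm_reindex _)) ?gA ?g_size.
- apply: cont_on_paste => //.
  move=> t0 ht0 e e_gt0; have [δ δ_gt0 hδ] := gc t0 ht0 e e_gt0.
  by exists δ => // t ht htt; apply: close_reindex; rewrite ?g_size ?hδ.
Qed.

Lemma lift_on_concat n u s w A b s' w' b' : u <= s -> s <= w -> s' <= s -> w <= w' ->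
  {in `[u, w], forall t, size (A t) = n} ->
  lift_on u s A b -> lift_on s' w' A b' -> exists b'', lift_on u w A b''.
Proof.
move=> us sw s's ww' A_n hb hb'; exists (glue b b' s).
by apply: lift_on_glue A_n hb (lift_on_sub s's ww' hb').
Qed.

Lemma constant_memP (s : seq T) : reflect {in s &, forall x y, x = y} (constant s).
Proof.
case: s => [|x s] /=; first by left.
apply: (iffP allP) => [sx y z|eq_s y ys].
  have xE w : w \in x :: s -> w = x by rewrite in_cons => /predU1P[//|/sx/eqP].
  by move=> /xE-> /xE->.
by apply/eqP/eq_s; rewrite ?mem_head ?in_cons ?ys ?orbT.
Qed.

Lemma nonconstantP (s : seq T) : ~~ constant s -> exists x y, [/\ x \in s, y \in s & x != y].
Proof.
move=> /constant_memP ncst; apply: contrapT => hn; apply: ncst => x y xs ys.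
by apply: contrapT => /eqP neq_xy; apply: hn; exists x, y.
Qed.

Lemma mclose_memr e s p w : mclose e s p -> w \in p -> exists2 z, z \in s & d z w < e.
Proof.
by move=> [s' /perm_mem s's /close_memr h] /h [z]; rewrite s's; exists z.
Qed.

Lemma mclose_meml e s p z : mclose e s p -> z \in s -> exists2 w, w \in p & d z w < e.
Proof.
move=> [s' /perm_mem s's /(close_sym d_sym)/close_memr h]; rewrite -s's => /h [w].
by exists w; rewrite // d_sym.
Qed.

Lemma cont_at_constant u v A b t0 : mpath u v A -> t0 \in `[u, v] -> constant (A t0) ->
  {in `[u, v], forall t, perm_eq (b t) (A t)} ->
  forall e, 0 < e -> exists2 δ, 0 < δ &
    forall t, t \in `[u, v] -> `|t - t0| < δ -> close e (b t) (b t0).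
Proof.
move=> Ac ht0 /(constantP x0) [c A0E] bA e e_gt0.
have [δ δ_gt0 hδ] := Ac t0 ht0 e e_gt0; exists δ => // t ht htt.
have [s' s'A] := hδ t ht htt; rewrite A0E => s'c.
have b0E : b t0 = nseq (size (b t0)) c.
  apply/all_pred1P/allP => z; rewrite (perm_mem (bA t0 ht0)) A0E.
  by case/nseqP => -> _ /=.
have size_bt : size (b t) = size (b t0).
  rewrite (perm_size (bA t ht)) (perm_size (bA t0 ht0)) -(perm_size s'A).
  by rewrite (close_size s'c) size_nseq A0E size_nseq.
rewrite b0E -size_bt close_nseq; apply/allP => z.
rewrite (perm_mem (bA t ht)) -(perm_mem s'A) => zs'.
have [w + w_lt] := close_memr (close_sym d_sym s'c) zs'.
by case/nseqP=> wc _; rewrite d_sym -wc.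
Qed.

Lemma nonconstant_nbhd u v A t0 : mpath u v A -> t0 \in `[u, v] -> ~~ constant (A t0) ->
  exists2 δ, 0 < δ &
    forall t, t \in `[u, v] -> `|t - t0| < δ -> ~~ constant (A t).
Proof.
move=> Ac ht0 /nonconstantP [x [y [xA yA neq_xy]]].
have dxy_gt0 : 0 < d x y / 2 by rewrite divr_gt0 ?(d_gt0 d_sym d_tri d_refl d_eq).
have [δ δ_gt0 hδ] := Ac t0 ht0 _ dxy_gt0; exists δ => // t ht htt.
apply/constant_memP => cst.
have [zx zx_in zx_lt] := mclose_memr (hδ t ht htt) xA.
have [zy zy_in zy_lt] := mclose_memr (hδ t ht htt) yA.
rewrite (cst zx zy) // in zx_lt; have := d_tri x zy y; rewrite (d_sym x zy); lra.
Qed.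

Definition ladder (s t : R) (k : nat) : R := t - (t - s) / k.+1%:R.

Fixpoint chain (s t : R) (b0 : R -> seq T) (piece : nat -> R -> seq T) k : R -> seq T :=
  if k is k'.+1 then glue (chain s t b0 piece k') (piece k') (ladder s t k') else b0.

Section Ladder.
Variables (s t : R).
Hypothesis st : s < t.

Lemma ladder0 : ladder s t 0 = s.
Proof. by rewrite /ladder divr1 opprB addrC subrK. Qed.

Lemma ladder_lt k : ladder s t k < t.
Proof. by rewrite /ladder ltrBlDr ltrDl divr_gt0 ?subr_gt0 ?ltr0n. Qed.

Lemma ladder_ltS k : ladder s t k < ladder s t k.+1.
Proof.
rewrite /ladder ltrD2l ltrN2 ltr_pM2l ?subr_gt0 //.
by rewrite ltf_pV2 ?posrE ?ltr0n // ltr_nat.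
Qed.

Lemma ladder_homo : {homo ladder s t : k j / (k <= j)%N >-> k <= j}.
Proof.
move=> k j kj; rewrite /ladder lerD2l lerN2 ler_wpM2l ?subr_ge0 ?(ltW st) //.
by rewrite lef_pV2 ?posrE ?ltr0n // ler_nat.
Qed.

Lemma ladder_ge k : s <= ladder s t k.
Proof. by rewrite -{1}ladder0 ladder_homo. Qed.

Definition rung (x : R) : nat := Num.truncn ((t - s) / (t - x)).

Lemma le_ladder_rung x : x < t -> x <= ladder s t (rung x).
Proof.
move=> xt; have tx_gt0 : 0 < t - x by rewrite subr_gt0.
rewrite /ladder lerBrDr -lerBrDl ler_pdivrMr ?ltr0n // mulrC -ler_pdivrMr //.
exact/ltW/truncnS_gt.
Qed.

Lemma chain_stable b0 piece k j x : (k <= j)%N -> x <= ladder s t k ->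
  chain s t b0 piece j x = chain s t b0 piece k x.
Proof.
elim: j => [|j IH]; first by rewrite leqn0 => /eqP->.
rewrite leq_eqVlt => /predU1P[->//|]; rewrite ltnS => kj xk /=.
by rewrite /glue (le_trans xk (ladder_homo kj)) IH.
Qed.

Variables (n : nat) (A : R -> seq T) (piece : nat -> R -> seq T).
Hypothesis A_n : {in `[s, t], forall x, size (A x) = n}.
Hypothesis lift_piece : forall k, lift_on (ladder s t k) (ladder s t k.+1) A (piece k).

Definition chain_limit x := if x < t then chain s t A piece (rung x) x else A x.

Lemma lift_on_chain k : lift_on s (ladder s t k) A (chain s t A piece k).
Proof.
elim: k => [|k IH]; first by rewrite ladder0; apply: lift_on_point.
apply: (lift_on_glue (n := n) _ _ _ IH (lift_piece k)).
- exact: ladder_ge.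
- exact/ltW/ladder_ltS.
- by move=> x /(subitvcc (lexx s) (ltW (ladder_lt _))); apply: A_n.
Qed.

Lemma chain_limitE k x : x < ladder s t k -> chain_limit x = chain s t A piece k x.
Proof.
move=> xk; rewrite /chain_limit (lt_trans xk (ladder_lt k)).
have [le_rk | lt_kr] := leqP (rung x) k.
  by rewrite (chain_stable _ _ le_rk) // le_ladder_rung // (lt_trans xk (ladder_lt k)).
by rewrite (chain_stable _ _ (ltnW lt_kr)) // ltW.
Qed.

Lemma chain_limit_perm : {in `[s, t], forall x, perm_eq (chain_limit x) (A x)}.
Proof.
move=> x hx; rewrite /chain_limit; case: ifP => // xt; have [chainA _] := lift_on_chain (rung x).
by apply: chainA; move: hx; rewrite !in_itv /= le_ladder_rung // => /andP[->].
Qed.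

Lemma chain_limit_cont y : y \in `[s, t] -> y < t -> forall e, 0 < e ->
  exists2 δ, 0 < δ & forall x, x \in `[s, t] -> `|x - y| < δ ->
    close e (chain_limit x) (chain_limit y).
Proof.
move=> hy yt e e_gt0; set k := (rung y).+1.
have yk : y < ladder s t k := le_lt_trans (le_ladder_rung yt) (ladder_ltS _).
have hyk : y \in `[s, ladder s t k] by move: hy; rewrite !in_itv /= (ltW yk) => /andP[->].
have [_ chain_c] := lift_on_chain k; have [δ δ_gt0 hδ] := chain_c y hyk e e_gt0.
exists (Num.min δ (ladder s t k - y)) => [|x]; first by rewrite lt_min δ_gt0 subr_gt0.
rewrite in_itv lt_min /= => /andP[sx _] /andP[hxδ /ltr_normlP[_ hxk]].
have xk : x < ladder s t k by lra.
by rewrite (chain_limitE xk) (chain_limitE yk); apply: hδ; rewrite // in_itv /= sx ltW.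
Qed.

End Ladder.

(* Countably many lifts on the rungs [ladder k, ladder k.+1] are glued; continuity
   at [t] comes for free because [A t] is constant. *)
Lemma lift_on_left_limit n s t A : s <= t -> {in `[s, t], forall x, size (A x) = n} ->
  mpath s t A -> constant (A t) -> (forall y, s <= y < t -> exists b, lift_on s y A b) ->
  exists b, lift_on s t A b.
Proof.
move=> le_st A_n Ac A_cst lifts.
have [<-|st] := eqVneq s t; first by exists A; apply: lift_on_point.
have {st le_st} st : s < t by rewrite lt_neqAle st.
have [piece lift_piece] : exists piece, forall k,
    lift_on (ladder s t k) (ladder s t k.+1) A (piece k).
  apply: (choice (fun k => lift_on (ladder s t k) (ladder s t k.+1) A)) => k.
  have [b hb] := lifts (ladder s t k.+1) ltac:(by rewrite ladder_ge ?ladder_lt).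
  by exists b; apply: lift_on_sub hb; rewrite ?ladder_ge.
have bA := chain_limit_perm st A_n lift_piece.
exists (chain_limit s t A piece); split => // y hy.
have [yt|] := boolP (y < t); first exact: (chain_limit_cont st A_n lift_piece hy yt).
move: hy; rewrite in_itv /= => /andP[_ yt] /negbTE yt'.
have -> : y = t by apply/eqP; rewrite eq_le yt leNgt yt'.
by apply: (cont_at_constant Ac _ A_cst bA); rewrite in_itv /= lexx (ltW st).
Qed.

Definition lifts_paths n := forall u v A,
  {in `[u, v], forall t, size (A t) = n} -> mpath u v A -> exists b, lift_on u v A b.

Lemma mpath_filter u v t0 A (P : pred T) r : 0 < r -> mpath u v A -> t0 \in `[u, v] ->
  {in `[u, v], forall t, mclose r (A t) (A t0)} ->
  {in `[u, v], forall t, {in A t, forall w z, d z w < r -> P z = P w}} ->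
  {in `[u, v], forall t, size (filter P (A t)) = count P (A t0)} /\
  mpath u v (fun t => filter P (A t)).
Proof.
move=> r_gt0 Ac ht0 A_r P_stable; split.
  move=> t ht; have [s' s'A s'A0] := A_r t ht.
  rewrite -(perm_size (perm_filter P s'A)) -size_filter.
  exact/close_size/(close_filter (P_stable t0 ht0)).
move=> t1 ht1 e e_gt0.
have [δ δ_gt0 hδ] := Ac t1 ht1 (Num.min e r) ltac:(by rewrite lt_min e_gt0 r_gt0).
exists δ => // t ht htt; have [s' s'A s'A1] := hδ t ht htt.
exists (filter P s'); first exact: perm_filter.
have [min_e min_r] : Num.min e r <= e /\ Num.min e r <= r by rewrite !ge_min !lexx orbT.
apply: (close_le min_e); apply: close_filter s'A1 => w w_in z dzw.
exact: (P_stable t1 ht1 w w_in z (lt_le_trans dzw min_r)).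
Qed.

Lemma lift_on_filterC u v A (P : pred T) b1 b2 :
  lift_on u v (fun t => filter P (A t)) b1 ->
  lift_on u v (fun t => filter (predC P) (A t)) b2 ->
  lift_on u v A (fun t => b1 t ++ b2 t).
Proof.
move=> [b1A b1c] [b2A b2c]; split.
  by move=> t ht; apply: perm_trans (perm_cat (b1A t ht) (b2A t ht)) _; rewrite perm_filterC.
move=> t0 ht0 e e_gt0.
have [δ1 δ1_gt0 h1] := b1c t0 ht0 e e_gt0; have [δ2 δ2_gt0 h2] := b2c t0 ht0 e e_gt0.
exists (Num.min δ1 δ2) => [|t ht]; first by rewrite lt_min δ1_gt0 δ2_gt0.
by rewrite lt_min => /andP[ht1 ht2]; apply: close_cat; [apply: h1 | apply: h2].
Qed.

Lemma cluster_stable p x r s : {in p, forall w, w != x -> 4 * r <= d w x} ->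
  mclose r s p -> {in s, forall w z, d z w < r -> (d z x < 2 * r) = (d w x < 2 * r)}.
Proof.
move=> sep s_p w ws z dzw.
have r_gt0 : 0 < r := le_lt_trans (d_ge0 d_sym d_tri d_refl z w) dzw.
have [dwx|dwx] : d w x < r \/ 3 * r < d w x.
  have [w' w'p dww'] := mclose_meml s_p ws.
  have [w'x | neq_w'x] := eqVneq w' x; [by left; rewrite -w'x | right].
  by have := sep w' w'p neq_w'x; have := d_tri w' w x; rewrite d_sym in dww'; lra.
  have dzx : d z x < 2 * r by have := d_tri z w x; lra.
  have dwx2 : d w x < 2 * r by lra.
  by rewrite dzx dwx2.
have dzx : 2 * r <= d z x by have := d_tri w z x; rewrite (d_sym w z); lra.
have dwx2 : 2 * r <= d w x by lra.
by rewrite !ltNge dzx dwx2.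
Qed.

Section LocalLift.
Variable n : nat.
Hypothesis IH : forall m, (m < n)%N -> lifts_paths m.

Lemma lift_on_cluster u v t0 A (P : pred T) r : 0 < r ->
  t0 \in `[u, v] -> {in `[u, v], forall t, size (A t) = n} -> mpath u v A ->
  {in `[u, v], forall t, mclose r (A t) (A t0)} ->
  {in `[u, v], forall t, {in A t, forall w z, d z w < r -> P z = P w}} ->
  (0 < count P (A t0) < n)%N -> exists b, lift_on u v A b.
Proof.
move=> r_gt0 ht0 A_n Ac A_r P_stable /andP[P_gt0 P_lt].
have PC_stable : {in `[u, v], forall t, {in A t, forall w z, d z w < r ->
    predC P z = predC P w}}.
  by move=> t ht w w_in z dzw /=; rewrite (P_stable t ht w w_in z dzw).
have [P_size P_c] := mpath_filter r_gt0 Ac ht0 A_r P_stable.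
have [PC_size PC_c] := mpath_filter r_gt0 Ac ht0 A_r PC_stable.
have sizeA0 := count_predC P (A t0); rewrite A_n // in sizeA0.
have [b1 hb1] := IH P_lt P_size P_c.
have [b2 hb2] := IH (ltac:(lia) : (count (predC P) (A t0) < n)%N) PC_size PC_c.
by exists (fun t => b1 t ++ b2 t); apply: lift_on_filterC hb1 hb2.
Qed.

Lemma local_lift u v t0 A : {in `[u, v], forall t, size (A t) = n} -> mpath u v A ->
  t0 \in `[u, v] -> ~~ constant (A t0) ->
  exists2 δ, 0 < δ & exists b, lift_on (Num.max u (t0 - δ)) (Num.min v (t0 + δ)) A b.
Proof.
move=> A_n Ac ht0 /nonconstantP [y [x [yA xA neq_yx]]].
have [r0 r0_gt0 sep] := separation d_sym d_tri d_refl d_eq (A t0) x.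
pose r := r0 / 4; have r_gt0 : 0 < r by rewrite divr_gt0.
have r0E : r0 = 4 * r by rewrite /r; lra.
have [δ δ_gt0 hδ] := Ac t0 ht0 r r_gt0.
exists (δ / 2); first by rewrite divr_gt0.
set u' := Num.max u _; set v' := Num.min v _.
have sub_uv : {subset `[u', v'] <= `[u, v]} by apply: subitvcc; rewrite ?le_max ?ge_min lexx.
have near_t0 t : t \in `[u', v'] -> `|t - t0| < δ.
  by rewrite in_itv /= ge_max le_min => /andP[/andP[_ ?] /andP[_ ?]]; rewrite ltr_norml; lra.
have ht0' : t0 \in `[u', v'].
  move: ht0; rewrite !in_itv /= ge_max le_min => /andP[-> ->] /=; lra.
have A_r : {in `[u', v'], forall t, mclose r (A t) (A t0)}.
  by move=> t ht; apply: hδ; [apply: sub_uv | apply: near_t0].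
pose Q z := d z x < 2 * r.
have Q_stable : {in `[u', v'], forall t, {in A t, forall w z, d z w < r -> Q z = Q w}}.
  by move=> t ht; apply: (cluster_stable _ (A_r t ht)) => w wA neq_wx; rewrite -r0E sep.
have Q_gt0 : (0 < count Q (A t0))%N.
  by rewrite -has_count; apply/hasP; exists x; rewrite // /Q d_refl; lra.
have Q_lt : (count Q (A t0) < n)%N.
  rewrite -(A_n t0 ht0) -(count_predC Q) -addn1 leq_add2l lt0n -lt0n -has_count.
  by apply/hasP; exists y; rewrite //= /Q -leNgt; have := sep y yA neq_yx; lra.
apply: (lift_on_cluster r_gt0 ht0' _ _ A_r Q_stable); rewrite ?Q_gt0 ?Q_lt //.
- by move=> t /sub_uv; apply: A_n.
- by apply: cont_on_sub Ac; rewrite ?le_max ?ge_min lexx.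
Qed.

Lemma lift_on_nonconstant u v A : u <= v -> {in `[u, v], forall t, size (A t) = n} ->
  mpath u v A -> {in `[u, v], forall t, ~~ constant (A t)} -> exists b, lift_on u v A b.
Proof.
move=> uv A_n Ac ncst.
have A_n' w : w <= v -> {in `[u, w], forall t, size (A t) = n}.
  by move=> wv t /(subitvcc (lexx u) wv); apply: A_n.
have local t : u <= t <= v -> exists2 δ, 0 < δ &
    exists b, lift_on (Num.max u (t - δ)) (Num.min v (t + δ)) A b.
  by move=> ht; apply: local_lift => //; apply: ncst.
apply: (@real_induction _ (fun y => exists b, lift_on u y A b) u v); last by rewrite uv lexx.
- by exists A; apply: lift_on_point.
- move=> t /andP[ut tv] [b hb]; have [δ δ_gt0 [b' hb']] := local t ltac:(by rewrite ut ltW).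
  exists δ => // s /andP[ts tsδ] sv.
  apply: (lift_on_concat _ _ _ _ (A_n' s sv) hb hb'); rewrite ?ge_max ?le_min ?ut ?sv;
    lra.
- move=> t /andP[ut tv] below; have [δ δ_gt0 [b' hb']] := local t ltac:(by rewrite ltW).
  have [|b hb] := below (Num.max u (t - δ / 2)).
    by rewrite le_max lexx gt_max ut /=; lra.
  apply: (lift_on_concat _ _ _ _ (A_n' t tv) hb hb'); rewrite ?ge_max ?le_min ?le_max ?lexx ?tv;
    lra.
Qed.

Lemma lift_on_nonconstant_co u v A : u <= v -> {in `[u, v], forall t, size (A t) = n} ->
  mpath u v A -> (forall t, u <= t < v -> ~~ constant (A t)) -> exists b, lift_on u v A b.
Proof.
move=> uv A_n Ac ncst; have [v_cst|v_ncst] := boolP (constant (A v)).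
  apply: (lift_on_left_limit uv A_n Ac v_cst) => y /andP[uy yv].
  apply: lift_on_nonconstant => //.
  - by move=> t /(subitvcc (lexx u) (ltW yv)); apply: A_n.
  - exact: cont_on_sub (lexx u) (ltW yv) Ac.
  by move=> t; rewrite in_itv /= => /andP[ut ty]; rewrite ncst // ut (le_lt_trans ty yv).
apply: lift_on_nonconstant => // t; rewrite in_itv /= => /andP[ut].
by rewrite le_eqVlt => /predU1P[->//|tv]; rewrite ncst // ut tv.
Qed.

Lemma lift_on_nonconstant_oc u v A : u <= v -> {in `[u, v], forall t, size (A t) = n} ->
  mpath u v A -> (forall t, u < t <= v -> ~~ constant (A t)) -> exists b, lift_on u v A b.
Proof.
move=> uv A_n Ac ncst.
have [b hb] : exists b, lift_on (- v) (- u) (fun t => A (- t)) b.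
  apply: lift_on_nonconstant_co (cont_on_opp Ac) _ => [|t|t /andP[vt tu]].
  - by rewrite lerN2.
  - by rewrite -oppr_itvcc; apply: A_n.
  - by apply: ncst; rewrite ltrNr lerNl vt tu.
by exists (fun t => b (- t)); apply: lift_on_oppK.
Qed.

Lemma lift_on_gap u v A : u <= v -> {in `[u, v], forall t, size (A t) = n} ->
  mpath u v A -> (forall t, u < t < v -> ~~ constant (A t)) -> exists b, lift_on u v A b.
Proof.
move=> uv A_n Ac ncst; pose m := (u + v) / 2.
have [um mv] : u <= m /\ m <= v by split; rewrite /m; lra.
have [b1 hb1] : exists b, lift_on u m A b.
  apply: lift_on_nonconstant_oc => //.
  - by move=> t /(subitvcc (lexx u) mv); apply: A_n.
  - exact: cont_on_sub (lexx u) mv Ac.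
  by move=> t /andP[ut tm]; apply: ncst; rewrite ut /=; rewrite /m in tm; lra.
have [b2 hb2] : exists b, lift_on m v A b.
  apply: lift_on_nonconstant_co => //.
  - by move=> t /(subitvcc um (lexx v)); apply: A_n.
  - exact: cont_on_sub um (lexx v) Ac.
  by move=> t /andP[mt tv]; apply: ncst; rewrite tv andbT; rewrite /m in mt; lra.
exact: lift_on_concat um mv (lexx m) (lexx v) A_n hb1 hb2.
Qed.

Section Gaps.
Variables (u v : R) (A : R -> seq T).
Hypotheses (A_n : {in `[u, v], forall t, size (A t) = n}) (Ac : mpath u v A).

Definition gap_start t := last_in (fun s => constant (A s)) u t.
Definition gap_end t := first_in (fun s => constant (A s)) v t.

Lemma gap_bounds t : t \in `[u, v] -> u <= gap_start t <= t /\ t <= gap_end t <= v.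
Proof.
rewrite in_itv /= => /andP[ut tv].
by rewrite last_in_ge ?last_in_le ?first_in_ge ?first_in_le.
Qed.

Lemma gap_nonconstant t s : t \in `[u, v] -> ~~ constant (A t) ->
  gap_start t < s < gap_end t -> ~~ constant (A s).
Proof.
move=> ht ncst /andP[lo_s s_hi]; move: ht; rewrite in_itv /= => /andP[ut tv].
have [st|ts] := leP s t.
  by apply/negP; apply: (last_in_gt (P := fun s => constant (A s)) ut); rewrite lo_s st.
by apply/negP; apply: (first_in_lt (P := fun s => constant (A s)) tv); rewrite (ltW ts) s_hi.
Qed.

Lemma gap_eq s t : s \in `[u, v] -> t \in `[u, v] ->
  {in `[Num.min s t, Num.max s t], forall r, ~~ constant (A r)} ->
  gap_start s = gap_start t /\ gap_end s = gap_end t.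
Proof.
wlog st : s t / s <= t.
  move=> wlog hs ht ncst; have [st|ts] := leP s t; first exact: wlog.
  by rewrite minC maxC in ncst; have [-> ->] := wlog t s (ltW ts) ht hs ncst.
rewrite (min_idPl st) (max_idPr st) !in_itv /= => /andP[us _] /andP[_ tv] ncst; split.
  apply: last_in_eq; first by rewrite us st.
  by move=> r /andP[sr rt]; apply/negP/ncst; rewrite in_itv /= (ltW sr) rt.
apply: first_in_eq; first by rewrite st tv.
by move=> r /andP[sr rt]; apply/negP/ncst; rewrite in_itv /= sr (ltW rt).
Qed.

Lemma lift_on_gap_of t : t \in `[u, v] -> ~~ constant (A t) ->
  exists b, lift_on (gap_start t) (gap_end t) A b.
Proof.
move=> ht ncst; have [/andP[u_lo lo_t] /andP[t_hi hi_v]] := gap_bounds ht.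
apply: lift_on_gap; first exact: le_trans lo_t t_hi.
- by move=> s /(subitvcc u_lo hi_v); apply: A_n.
- exact: cont_on_sub u_lo hi_v Ac.
by move=> s; apply: gap_nonconstant.
Qed.

(* At constant times the lift is forced (and automatically continuous); on each gap
   between constant times a lift is chosen once and for all. *)
Lemma lift_on_path : exists b, lift_on u v A b.
Proof.
pose L x y := epsilon (inhabits A) (lift_on x y A).
pose b t := if constant (A t) then A t else L (gap_start t) (gap_end t) t.
have hL t : t \in `[u, v] -> ~~ constant (A t) ->
    lift_on (gap_start t) (gap_end t) A (L (gap_start t) (gap_end t)).
  by move=> ht ncst; apply: epsilon_spec; apply: lift_on_gap_of.
have bA : {in `[u, v], forall t, perm_eq (b t) (A t)}.
  move=> t ht; rewrite /b; case: ifPn => // ncst; have [LA _] := hL t ht ncst.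
  by apply: LA; have [/andP[_ lo_t] /andP[t_hi _]] := gap_bounds ht; rewrite in_itv /= lo_t.
exists b; split => // t0 ht0 e e_gt0.
have [cst|ncst] := boolP (constant (A t0)); first exact: (cont_at_constant Ac ht0 cst bA).
have [δ1 δ1_gt0 near_ncst] := nonconstant_nbhd Ac ht0 ncst.
have [/andP[_ lo_t0] /andP[t0_hi _]] := gap_bounds ht0.
have [_ Lc] := hL t0 ht0 ncst.
have [δ2 δ2_gt0 hδ2] := Lc t0 ltac:(by rewrite in_itv /= lo_t0 t0_hi) e e_gt0.
exists (Num.min δ1 δ2) => [|t ht]; first by rewrite lt_min δ1_gt0 δ2_gt0.
rewrite lt_min => /andP[tt0 tt0'].
have between r : r \in `[Num.min t t0, Num.max t t0] -> ~~ constant (A r).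
  move: ht ht0 tt0; rewrite !in_itv /= ge_min le_max => /andP[ut tv] /andP[ut0 t0v].
  move=> /ltr_normlP[tt0l tt0r] /andP[hr1 hr2].
  by apply: near_ncst; rewrite ?in_itv /= ?ltr_norml;
    case/orP: hr1 => ?; case/orP: hr2 => ?; apply/andP; split; lra.
have [lo_eq hi_eq] := gap_eq ht ht0 between.
have t_ncst : ~~ constant (A t).
  by apply: between; rewrite in_itv /= ge_min le_max lexx.
rewrite /b (negbTE t_ncst) (negbTE ncst) lo_eq hi_eq; apply: hδ2 => //.
by have [/andP[_ lo_t] /andP[t_hi _]] := gap_bounds ht; rewrite in_itv /= -lo_eq -hi_eq lo_t t_hi.
Qed.

End Gaps.

End LocalLift.

Lemma lifts_paths_all n : lifts_paths n.
Proof.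
elim/ltn_ind: n => n IH u v A A_n Ac.
exact: (lift_on_path IH A_n Ac).
Qed.

End Lifting.

Section ComplexDistance.
Variable R : realType.

Lemma cdistC (x y : R[i]) : cdist x y = cdist y x.
Proof. by rewrite /cdist -normcN opprB. Qed.

Lemma cdist_triangle (x y z : R[i]) : cdist x z <= cdist x y + cdist y z.
Proof. by rewrite /cdist (le_trans _ (le_normcD _ _)) // addrA subrK. Qed.

Lemma cdistxx (x : R[i]) : cdist x x = 0.
Proof. by rewrite /cdist subrr Normc.normc0. Qed.

Lemma cdist_eq0 (x y : R[i]) : cdist x y = 0 -> x = y.
Proof. by rewrite /cdist => /Normc.eq0_normc /eqP; rewrite subr_eq0 => /eqP. Qed.

End ComplexDistance.

Lemma codom_nth (T : Type) (x0 : T) n (s : seq T) :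
  size s = n -> codom (fun i : 'I_n => nth x0 s i) = s.
Proof.
move=> s_n; rewrite codomE -[in RHS](mkseq_nth x0 s) s_n /mkseq -val_enum_ord -map_comp.
by apply: eq_map.
Qed.

Lemma nth_codom_ord (T : Type) (x0 : T) n (x : 'I_n -> T) (i : 'I_n) :
  nth x0 (codom x) i = x i.
Proof. by rewrite codomE (nth_map i) ?size_enum_ord // nth_ord_enum. Qed.

Section Existence.
Variables (R : realType) (n : nat).
Local Notation C := R[i].
Local Notation close := (close (@cdist R)).
Local Notation mclose := (mclose (@cdist R)).
Local Notation mpath := (mpath (@cdist R)).
Local Notation lift_on := (lift_on (@cdist R)).

Lemma MultE (x : 'I_n -> C) : Mult x = seq_mset (codom x).
Proof. by rewrite /Mult codomE. Qed.

Lemma in01_itv (t : R) : in01 t <-> t \in `[0, 1].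
Proof. by rewrite in_itv. Qed.

(* The multisets having an enumeration [e]-close to [codom (f t0)] form an open set,
   by [close_slack]. *)
Lemma mpath_Mult (a : R -> multiset C) (f : R -> 'I_n -> C) :
  is_path_Multn n a -> (forall t, in01 t -> Mult (f t) = a t) ->
  mpath 0 1 (fun t => codom (f t)).
Proof.
move=> [_ a_open] fa t0 ht0 e e_gt0; set p := codom (f t0).
have {}ht0 : in01 t0 by apply/in01_itv.
pose U m := exists2 s, seq_mset s = m & mclose e s p.
have U_open : openMultn n U.
  move=> x [s s_x [s' s's /close_slack [e' e'_gt0 s'p]]].
  have {}s_x : perm_eq s (codom x) by apply/eq_seq_msetP; rewrite s_x MultE.
  have [Is_iota s'E] := alignP 0 (perm_trans s's s_x).
  set Is := align _ _ _ in Is_iota s'E.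
  exists e' => // y xy; exists (codom y); first by rewrite MultE.
  have Is_iota' : perm_eq Is (iota 0 (size (codom y))) by rewrite size_codom -(size_codom x).
  exists (reindex 0 Is (codom y)); first exact: perm_reindex.
  have yx : close e' (reindex 0 Is (codom y)) s'.
    by rewrite s'E; apply: (close_reindex (d := @cdist R)) => //; apply: close_codom.
  by have := close_trans (@cdist_triangle R) yx s'p; rewrite addrC subrK.
have U_a0 : U (a t0).
  exists p; first by rewrite -fa ?MultE.
  by exists p => //; apply: (close_refl (@cdistxx R)).
have [δ δ_gt0 hδ] := a_open U U_open t0 ht0 U_a0.
exists δ => // t /in01_itv ht htt; have [s s_at [s' s's s'p]] := hδ t ht htt.
exists s' => //; apply: perm_trans s's _; apply/eq_seq_msetP.
by rewrite s_at -fa // MultE.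
Qed.

Lemma lift_exists (a : R -> multiset C) (x0 : 'I_n -> C) :
  is_path_Multn n a -> Mult x0 = a 0 ->
  exists b : R -> ('I_n -> C),
    [/\ is_path_Cn b, b 0 = x0 & forall t, in01 t -> Mult (b t) = a t].
Proof.
move=> hp a0.
have [f fa] : exists f : R -> 'I_n -> C, forall t, in01 t -> Mult (f t) = a t.
  apply: (choice (fun t x => in01 t -> Mult x = a t)) => t.
  have [ht|nt] := pselect (in01 t); last by exists x0.
  by have [x xa] := proj1 hp t ht; exists x.
have A_n : {in `[0, 1], forall t, size (codom (f t)) = n}.
  by move=> t _; rewrite size_codom card_ord.
have [b [bA bc]] := lifts_paths_all 0 (@cdistC R) (@cdist_triangle R) (@cdistxx R)
  (@cdist_eq0 R) A_n (mpath_Mult hp fa).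
have h0 : (0 : R) \in `[0, 1] by rewrite in_itv /= lexx ler01.
have b_n t : t \in `[0, 1] -> size (b t) = n by move=> ht; rewrite (perm_size (bA t ht)) A_n.
have x0b : perm_eq (codom x0) (b 0).
  rewrite perm_sym (permPl (bA 0 h0)); apply/eq_seq_msetP.
  by rewrite -!MultE fa ?a0 ?in01_itv.
have [Is_iota bE] := alignP 0 x0b; set Is := align _ _ _ in Is_iota bE.
have Is_n : size Is = n by rewrite (perm_size Is_iota) size_iota b_n.
have Is_iota' t : t \in `[0, 1] -> perm_eq Is (iota 0 (size (b t))).
  by move=> ht; rewrite b_n // -(b_n 0 h0).
exists (fun t (i : 'I_n) => nth 0 (reindex 0 Is (b t)) i); split.
- move=> t /in01_itv ht e e_gt0; have [δ δ_gt0 hδ] := bc t ht e e_gt0.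
  exists δ => // s /in01_itv hs hst i.
  have := close_reindex 0 (Is_iota' s hs) (hδ s hs hst).
  by move/(close_nth 0); apply; rewrite size_map Is_n.
- by apply: funext => i; rewrite /= -bE nth_codom_ord.
- move=> t /[dup] /in01_itv ht ht'; rewrite MultE codom_nth ?size_map // -fa // MultE.
  by apply/eq_seq_msetP; rewrite (permPl (perm_reindex _ (Is_iota' t ht))) bA.
Qed.

End Existence.

Lemma part_le_size (lam mu : seq nat) :
  part_le lam mu -> all (fun k => 0 < k)%N mu -> (size mu <= size lam)%N.
Proof.
move=> [f hf] mu_gt0.
have f_onto j : j \in codom f.
  apply: contraT => /negP j_out; move/allP/(_ _ (mem_nth 0%N (ltn_ord j))): mu_gt0.
  by rewrite hf big1 // => i /eqP fij; case: j_out; rewrite -fij codom_f.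
pose g j := iinv (f_onto j).
have g_inj : injective g by move=> j1 j2 /(congr1 f); rewrite !f_iinv.
by have := leq_card g g_inj; rewrite !card_ord.
Qed.

Section Uniqueness.
Variables (R : realType) (n : nat).
Local Notation C := R[i].

Lemma size_Shape (x : 'I_n -> C) : size (Shape (Mult x)) = size (undup (codom x)).
Proof.
rewrite /Shape size_sort size_map -(perm_size (perm_undup_mset _)) MultE.
apply/eqP; rewrite eqn_leq !uniq_leq_size ?undup_uniq // => z;
  by rewrite !mem_undup (perm_mem (perm_eq_seq_mset _)).
Qed.

Lemma Shape_gt0 (m : multiset C) : all (fun k => 0 < k)%N (Shape m).
Proof. by apply/allP => k; rewrite mem_sort => /mapP [c c_supp ->]; rewrite mset_gt0 -msuppE. Qed.

Lemma path_eq_left_limit (b1 b2 : R -> 'I_n -> C) t : is_path_Cn b1 -> is_path_Cn b2 ->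
  0 < t <= 1 -> (forall s, 0 <= s < t -> b1 s = b2 s) -> b1 t = b2 t.
Proof.
move=> c1 c2 /andP[t_gt0 t_le1] eq_before; have ht : in01 t by rewrite /in01 ltW.
apply: funext => i; apply: cdist_eq0; apply/eqP.
rewrite eq_le (d_ge0 (@cdistC R) (@cdist_triangle R) (@cdistxx R)) andbT.
apply/ler_addgt0Pr => e e_gt0; rewrite add0r.
have e2_gt0 : 0 < e / 2 by rewrite divr_gt0.
have [δ1 δ1_gt0 h1] := c1 t ht _ e2_gt0; have [δ2 δ2_gt0 h2] := c2 t ht _ e2_gt0.
pose δ := Num.min δ1 δ2.
have [δ_le1 δ_le2] : δ <= δ1 /\ δ <= δ2 by rewrite !ge_min !lexx orbT.
have δ_gt0 : 0 < δ by rewrite lt_min δ1_gt0 δ2_gt0.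
pose s := Num.max 0 (t - δ / 2).
have [s_ge0 s_lt] : 0 <= s /\ s < t by rewrite le_max lexx gt_max t_gt0; split=> //; lra.
have hs : in01 s by rewrite /in01 s_ge0 (le_trans (ltW s_lt)).
have st : `|s - t| < δ.
  have ts : t - δ / 2 <= s by rewrite le_max lexx orbT.
  by rewrite ltr_norml; apply/andP; split; lra.
have := h1 s hs (lt_le_trans st δ_le1) i; have := h2 s hs (lt_le_trans st δ_le2) i.
rewrite (eq_before s) ?s_ge0 // => d2 d1.
by have := cdist_triangle (b1 t i) (b2 s i) (b2 t i); rewrite (cdistC (b1 t i) (b2 s i)); lra.
Qed.

Section TwoLifts.
Variables (a : R -> multiset C) (b1 b2 : R -> 'I_n -> C).
Hypotheses (a_shape : weakly_increasing_shape a).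
Hypotheses (c1 : is_path_Cn b1) (ab1 : forall t, in01 t -> Mult (b1 t) = a t).
Hypotheses (c2 : is_path_Cn b2) (ab2 : forall t, in01 t -> Mult (b2 t) = a t).

Lemma distinct_values_homo s t : in01 s -> in01 t -> s <= t ->
  (size (undup (codom (b1 t))) <= size (undup (codom (b1 s))))%N.
Proof.
move=> hs ht st; rewrite -!size_Shape !ab1 //.
by apply: part_le_size (Shape_gt0 _); apply: a_shape.
Qed.

Lemma lifts_agree_after t : 0 <= t < 1 -> b1 t = b2 t ->
  exists2 δ, 0 < δ & forall s, t < s < t + δ -> s <= 1 -> b1 s = b2 s.
Proof.
move=> /andP[t_ge0 t_lt1] eq_t; have ht : in01 t by rewrite /in01 t_ge0 ltW.
have [r r_gt0 sep] := separation_pairwise (@cdistC R) (@cdist_triangle R) (@cdistxx R)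
  (@cdist_eq0 R) (codom (b1 t)).
have r2_gt0 : 0 < r / 2 by rewrite divr_gt0.
have [δ1 δ1_gt0 h1] := @c1 t ht _ r2_gt0; have [δ2 δ2_gt0 h2] := @c2 t ht _ r2_gt0.
exists (Num.min δ1 δ2) => [|s /andP[ts s_lt] s_le1]; first by rewrite lt_min δ1_gt0 δ2_gt0.
have hs : in01 s by rewrite /in01 s_le1 andbT; lra.
have : `|s - t| < Num.min δ1 δ2 by rewrite ltr_norml; apply/andP; split; lra.
rewrite lt_min => /andP[st1 st2].
apply: funext; apply: (rigidity (@cdistC R) (@cdist_triangle R) sep).
- by move=> i; apply: h1.
- by move=> i; rewrite eq_t; apply: h2.
- by apply/eq_seq_msetP; rewrite -!MultE ab1 ?ab2.
- by apply: distinct_values_homo => //; apply: ltW.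
Qed.

End TwoLifts.

Lemma lift_unique (a : R -> multiset C) (x0 : 'I_n -> C) : weakly_increasing_shape a ->
  forall b1 b2 : R -> ('I_n -> C),
    is_path_Cn b1 -> b1 0 = x0 -> (forall t, in01 t -> Mult (b1 t) = a t) ->
    is_path_Cn b2 -> b2 0 = x0 -> (forall t, in01 t -> Mult (b2 t) = a t) ->
    forall t, in01 t -> b1 t = b2 t.
Proof.
move=> a_shape b1 b2 c1 b10 ab1 c2 b20 ab2.
rewrite /in01; apply: (@real_induction _ (fun t => b1 t = b2 t)).
- by rewrite b10 b20.
- exact: (lifts_agree_after a_shape c1 ab1 c2 ab2).
- by move=> t; apply: path_eq_left_limit.
Qed.

End Uniqueness.

Theorem theorem8p3 (R : realType) (n : nat) (a : R -> multiset R[i])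
    (x0 : 'I_n -> R[i]) :
  is_path_Multn n a -> Mult x0 = a 0 ->
  (exists b : R -> ('I_n -> R[i]),
     [/\ is_path_Cn b, b 0 = x0 & forall t, in01 t -> Mult (b t) = a t]) /\
  (weakly_increasing_shape a ->
   forall b1 b2 : R -> ('I_n -> R[i]),
     is_path_Cn b1 -> b1 0 = x0 -> (forall t, in01 t -> Mult (b1 t) = a t) ->
     is_path_Cn b2 -> b2 0 = x0 -> (forall t, in01 t -> Mult (b2 t) = a t) ->
     forall t, in01 t -> b1 t = b2 t).
Proof.
move=> a_path a0; split; first exact: lift_exists a_path a0.
by move=> a_shape; apply: lift_unique a_shape.
Qed.
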